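(* Let $N=pq$ where $p<q$ are primes. Let $f\in\mathbb{Z}[X]$ and $d:=\deg f$. Let $n$ be the number of distinct zeros of $f$ modulo $p$ and $m$ the number of distinct zeros of $f$ modulo $q$. Then: (1) $\nu(f)=mp+nq-2nm$. (2) If $f\neq 0$ in $\mathbb{Z}_p[X]$ and in $\mathbb{Z}_q[X]$, and $d<p/2$, then $\nu(f)\leq dp+dq-2d^2$.
   Context: $Z_N=\{0,1,\dots,N-1\}$ and $\mathbb{Z}_n=\mathbb{Z}/n\mathbb{Z}$. For $g\in\mathbb{Z}[X]$, an element $x\in Z_N$ is called suitable for $g$ if $1<\gcd(g(x),N)<N$, and $\nu(g)$ denotes the number of $x\in Z_N$ suitable for $g$. *)

From HB Require Import structures.
From mathcomp Require Import all_boot all_order all_algebra.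
Set Implicit Arguments. Unset Strict Implicit. Unset Printing Implicit Defensive.
Import Order.TTheory GRing.Theory Num.Theory.
Local Open Scope ring_scope.

Definition suitable (N : nat) (g : {poly int}) (x : nat) : bool :=
  (1 < gcdn `|g.[x%:Z]|%N N < N)%N.

Definition nu (N : nat) (g : {poly int}) : nat :=
  #|[set x : 'I_N | suitable N g x]|.

Definition nzeros_mod (p : nat) (g : {poly int}) : nat :=
  #|[set x : 'I_p | (p%:Z %| g.[(x : nat)%:Z])%Z]|.

Definition red_poly (p : nat) (g : {poly int}) : {poly 'F_p} :=
  map_poly (fun c : int => c%:~R) g.

From HB Require Import structures.
From mathcomp Require Import all_boot all_order all_algebra.
From mathcomp Require Import zify.
Set Implicit Arguments. Unset Strict Implicit. Unset Printing Implicit Defensive.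
Import Order.TTheory GRing.Theory Num.Theory.
Local Open Scope ring_scope.

(* By the Chinese remainder theorem, x in Z_pq is suitable for f exactly when
   one but not both of p and q divides f(x); counting pairs of residues gives
   nu(f) = n(q - m) + (p - n)m.  A nonzero polynomial over the field Z_p has at
   most d roots, so n, m <= d, and then
     dp + dq - 2d^2 - nu(f) = (d - n)(q - 2d) + (d - m)(p - 2d) + 2(d - n)(d - m),
   which is nonnegative when 2d < p < q. *)

Lemma card_roots_inj_lt (T : finType) (R : idomainType) (g : {poly R}) (h : T -> R) :
  g != 0 -> injective h -> (#|[set x | root g (h x)]| < size g)%N.
Proof.
move=> g_neq0 h_inj; pose rs := map h (enum [set x | root g (h x)]).
suff : (size rs < size g)%N by rewrite size_map -cardE.
apply: max_poly_roots g_neq0 _ _; last by rewrite map_inj_uniq ?enum_uniq.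
by apply/allP => y /mapP[x]; rewrite mem_enum inE => ? ->.
Qed.

Section ReductionModPrime.

Variable p : nat.
Hypothesis p_pr : prime p.

Lemma root_red_poly (f : {poly int}) (x : nat) :
  root (red_poly p f) x%:R = (p%:Z %| f.[x%:Z])%Z.
Proof.
rewrite (dvdz_pcharf (pchar_Fp p_pr)) /root -[x%:R]/((x%:Z)%:~R : 'F_p).
by rewrite /red_poly (horner_map (intr : int -> 'F_p)).
Qed.

Lemma dvdz_horner_modn (f : {poly int}) (x : nat) :
  (p%:Z %| f.[(x %% p)%N%:Z])%Z = (p%:Z %| f.[x%:Z])%Z.
Proof. by rewrite -!root_red_poly Fp_nat_mod. Qed.

Lemma nzeros_mod_le_deg (f : {poly int}) :
  red_poly p f != 0 -> (nzeros_mod p f <= (size f).-1)%N.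
Proof.
move=> red_neq0; have nat_Fp_inj : injective (fun x : 'I_p => (x : nat)%:R : 'F_p).
  move=> x y /(congr1 val); rewrite /= !val_Fp_nat // !modn_small //.
  exact: val_inj.
have card_lt := leq_trans (card_roots_inj_lt red_neq0 nat_Fp_inj) (size_poly _ _).
rewrite /nzeros_mod -ltnS (ltn_predK card_lt).
by under eq_finset do rewrite -root_red_poly.
Qed.

End ReductionModPrime.

Section ChineseCount.

Variables p q : nat.
Hypotheses (p_gt0 : (0 < p)%N) (q_gt0 : (0 < q)%N) (co_pq : coprime p q).

Lemma card_chinese_and (P Q : pred nat) :
  #|[set x : 'I_(p * q) | P (x %% p)%N && Q (x %% q)%N]| =
  (#|[set x : 'I_p | P x]| * #|[set y : 'I_q | Q y]|)%N.
Proof.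
pose crt (x : 'I_(p * q)) := (Ordinal (ltn_pmod x p_gt0), Ordinal (ltn_pmod x q_gt0)).
have crt_inj : injective crt.
  move=> x y [/= eq_p eq_q]; apply/val_inj/eqP.
  rewrite /= -(modn_small (ltn_ord x)) -(modn_small (ltn_ord y)).
  by rewrite chinese_remainder // eq_p eq_q !eqxx.
have crt_bij : bijective crt by apply: inj_card_bij; rewrite // card_prod !card_ord.
rewrite -cardsX -(on_card_preimset (onW_bij _ crt_bij)).
by apply: eq_card => x; rewrite !inE.
Qed.

Lemma card_chinese_xor (P Q : pred nat) :
  #|[set x : 'I_(p * q) | P (x %% p)%N != Q (x %% q)%N]| =
  (#|[set x : 'I_p | P x]| * (q - #|[set y : 'I_q | Q y]|) +
   (p - #|[set x : 'I_p | P x]|) * #|[set y : 'I_q | Q y]|)%N.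
Proof.
have card_not n (R : pred nat) :
    #|[set x : 'I_n | ~~ R x]| = (n - #|[set x : 'I_n | R x]|)%N.
  have -> : [set x : 'I_n | ~~ R x] = ~: [set x : 'I_n | R x] by apply/setP => x; rewrite !inE.
  by rewrite cardsCs setCK card_ord.
rewrite -(card_not q Q) -(card_not p P) -(card_chinese_and P (predC Q)).
rewrite -(card_chinese_and (predC P) Q) -cardsUI.
have -> : [set x : 'I_(p * q) | P (x %% p)%N && predC Q (x %% q)%N] :&:
          [set x : 'I_(p * q) | predC P (x %% p)%N && Q (x %% q)%N] = set0.
  by apply/setP => x; rewrite !inE; case: (P _); case: (Q _).
rewrite cards0 addn0; apply: eq_card => x; rewrite !inE.
by case: (P _); case: (Q _).
Qed.

End ChineseCount.

Lemma proper_gcdn_mul_primes (p q a : nat) : prime p -> prime q -> p != q ->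
  (1 < gcdn a (p * q) < p * q)%N = ((p %| a)%N != (q %| a)%N).
Proof.
move=> p_pr q_pr p_neq_q; have co_pq : coprime p q by rewrite prime_coprime ?dvdn_prime2.
have pq_gt0 : (0 < p * q)%N by rewrite muln_gt0 !prime_gt0.
have g_gt0 : (0 < gcdn a (p * q))%N by rewrite gcdn_gt0 pq_gt0 orbT.
have g_le : (gcdn a (p * q) <= p * q)%N by rewrite dvdn_leq ?dvdn_gcdr.
have g_eq1 : (gcdn a (p * q) == 1%N) = ~~ (p %| a)%N && ~~ (q %| a)%N.
  by rewrite -/(coprime _ _) coprimeMr !(coprime_sym a) !prime_coprime.
have g_eqpq : (gcdn a (p * q) == p * q)%N = (p %| a)%N && (q %| a)%N.
  by rewrite -Gauss_dvd //; apply/eqP/idP => [<-|/gcdn_idPr //]; apply: dvdn_gcdl.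
rewrite ltn_neqAle g_gt0 andbT [(_ < p * q)%N]ltn_neqAle g_le andbT eq_sym g_eq1 g_eqpq.
by case: (p %| a)%N; case: (q %| a)%N.
Qed.

Lemma nu_mul_primes (p q : nat) (f : {poly int}) : prime p -> prime q -> p != q ->
  nu (p * q) f = (nzeros_mod p f * (q - nzeros_mod q f) +
                  (p - nzeros_mod p f) * nzeros_mod q f)%N.
Proof.
move=> p_pr q_pr p_neq_q; have co_pq : coprime p q by rewrite prime_coprime ?dvdn_prime2.
pose root_mod r (x : nat) := (r%:Z %| f.[x%:Z])%Z.
transitivity #|[set x : 'I_(p * q) | root_mod p (x %% p)%N != root_mod q (x %% q)%N]|.
  apply: eq_card => x; rewrite !inE /suitable proper_gcdn_mul_primes //.
  by rewrite /root_mod !dvdz_horner_modn // !dvdzE.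
exact: card_chinese_xor (prime_gt0 p_pr) (prime_gt0 q_pr) co_pq _ _.
Qed.

Lemma mul_primes_count_eq (p q n m : nat) : (n <= p)%N -> (m <= q)%N ->
  (n * (q - m) + (p - n) * m)%N%:Z = (m * p)%:Z + (n * q)%:Z - 2 * (n * m)%:Z.
Proof.
move=> n_le_p m_le_q; rewrite mulnBr mulnBl.
have := leq_mul (leqnn n) m_le_q; have := leq_mul n_le_p (leqnn m); lia.
Qed.

Lemma mul_primes_count_le (p q d n m : nat) :
  (n <= d)%N -> (m <= d)%N -> (2 * d < p < q)%N ->
  (m * p)%:Z + (n * q)%:Z - 2 * (n * m)%:Z <= (d * p)%:Z + (d * q)%:Z - 2 * (d * d)%:Z.
Proof.
move=> n_le_d m_le_d /andP[d_lt_p p_lt_q].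
have n_term_ge0 : 0 <= (d%:Z - n%:Z) * (q%:Z - 2 * d%:Z) by rewrite mulr_ge0 // subr_ge0; lia.
have m_term_ge0 : 0 <= (d%:Z - m%:Z) * (p%:Z - 2 * d%:Z) by rewrite mulr_ge0 // subr_ge0; lia.
have cross_term_ge0 : 0 <= (d%:Z - n%:Z) * (d%:Z - m%:Z) by rewrite mulr_ge0 // subr_ge0; lia.
lia.
Qed.

Theorem theorem2p8 (p q : nat) (f : {poly int}) :
  prime p -> prime q -> (p < q)%N ->
  let N := (p * q)%N in
  let d := (size f).-1 in
  let n := nzeros_mod p f in
  let m := nzeros_mod q f in
  ((nu N f)%:Z = (m * p)%:Z + (n * q)%:Z - 2 * (n * m)%:Z)
  /\
  (red_poly p f != 0 -> red_poly q f != 0 -> (2 * d < p)%N ->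
     ((nu N f)%:Z <= (d * p)%:Z + (d * q)%:Z - 2 * (d * d)%:Z)).
Proof.
move=> p_pr q_pr p_lt_q N d n m.
have nu_eq : (nu N f)%:Z = (m * p)%:Z + (n * q)%:Z - 2 * (n * m)%:Z.
  rewrite nu_mul_primes ?neq_ltn ?p_lt_q // mul_primes_count_eq //.
    by rewrite -[X in (_ <= X)%N]card_ord max_card.
  by rewrite -[X in (_ <= X)%N]card_ord max_card.
split=> // red_p_neq0 red_q_neq0 d_lt_p; rewrite nu_eq.
apply: mul_primes_count_le; rewrite ?d_lt_p //; exact: nzeros_mod_le_deg.
Qed.
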